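(* Let $p\ge2$ be an integer and let $G$ be a graph. If $G=H\cup I$ where $H$ is a subgraph of $G$ and $I$ is an induced subgraph of $G$ (so $V(G)=V(H)\cup V(I)$ and $E(G)=E(H)\cup E(I)$), then $\mathrm{id}^{\leq p}(G)\leq \mathrm{id}^{\leq p}(H)+\mathrm{id}^{\leq p}(I)$.
   Context: All graphs are finite and simple. For an oriented graph $D$ and $X\subseteq V(D)$, the inversion of $X$ reverses every arc with both endvertices in $X$; a $(\leq p)$-inversion is the inversion of a set of at most $p$ vertices. $\mathrm{id}^{\leq p}(G)$ is the maximum, over all ordered pairs $(\vec G_1,\vec G_2)$ of orientations of $G$, of the minimum number of $(\leq p)$-inversions transforming $\vec G_1$ into $\vec G_2$. *)

From mathcomp Require Import all_boot.
From Stdlib Require Import ClassicalEpsilon.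
Set Implicit Arguments. Unset Strict Implicit. Unset Printing Implicit Defensive.

Section Inversions.
Variable T : finType.

(* An oriented graph on (a subset of) T is encoded by its arc indicator:
   o (x, y) = true iff there is an arc x -> y. *)
Definition arcs := {ffun T * T -> bool}.

Definition is_orientation (e : rel T) (o : arcs) : bool :=
  [forall x, forall y, (o (x, y) ==> e x y) && (e x y ==> (o (x, y) != o (y, x)))].

Definition invert (X : {set T}) (o : arcs) : arcs :=
  [ffun xy : T * T => if (xy.1 \in X) && (xy.2 \in X) then o (xy.2, xy.1) else o xy].

Definition apply_inversions (s : seq {set T}) (o : arcs) : arcs :=
  foldl (fun o X => invert X o) o s.

Definition transformable (p : nat) (V : {set T}) (o1 o2 : arcs) (k : nat) : bool :=
  [exists s : k.-tuple {set T},
     all (fun X : {set T} => (X \subset V) && (#|X| <= p)) s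
     && (apply_inversions s o1 == o2)].

(* minimum number of (<= p)-inversions transforming o1 into o2
   (0 by convention if impossible; never happens for p >= 2) *)
Definition inv_dist (p : nat) (V : {set T}) (o1 o2 : arcs) : nat :=
  match excluded_middle_informative (exists k, transformable p V o1 o2 k) with
  | left h => ex_minn h
  | right _ => 0
  end.

Definition inv_diam (p : nat) (V : {set T}) (e : rel T) : nat :=
  \max_(o1 | is_orientation e o1) \max_(o2 | is_orientation e o2) inv_dist p V o1 o2.

End Inversions.

(* For p >= 2 any two orientations of a graph are joined by inversions of
   2-sets, one per disagreeing edge, so id(G) is a maximum of attained
   distances.  Transform the H-part first and the I-part second.  Restricted
   to the arcs of H, an orientation of G is an orientation of H, so at most
   id(H) inversions inside V(H) fix every arc of H.  At most id(I) inversions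
   inside V(I) then fix every arc of I; they reverse only arcs with both ends
   in V(I), all of which are arcs of I because I is induced, so the arcs of H
   outside I stay fixed. *)
From mathcomp Require Import all_boot.
From Stdlib Require Import ClassicalEpsilon.
Set Implicit Arguments. Unset Strict Implicit. Unset Printing Implicit Defensive.

Section Inversions.
Variable T : finType.
Implicit Types (e : rel T) (o : arcs T) (X V W : {set T}) (s : seq {set T}).

Definition inversions_within p V s := all (fun X => (X \subset V) && (#|X| <= p)) s.

Definition restrict e o : arcs T := [ffun xy => o xy && e xy.1 xy.2].

Definition disagreements o1 o2 : {set T * T} := [set xy | o1 xy && o2 (xy.2, xy.1)].

Lemma invertE X o a b :
  invert X o (a, b) = if (a \in X) && (b \in X) then o (b, a) else o (a, b).
Proof. by rewrite ffunE. Qed.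

Lemma is_orientationP e o :
  reflect (forall x y, (o (x, y) -> e x y) /\ (e x y -> o (y, x) = ~~ o (x, y)))
          (is_orientation e o).
Proof.
apply: (iffP forallP) => [h x y | h x].
  have /forallP/(_ y)/andP[/implyP arc /implyP edge] := h x.
  by split=> // /edge; case: (o (x, y)); case: (o (y, x)).
apply/forallP => y; have [arc edge] := h x y.
by apply/andP; split; apply/implyP => // /edge ->; case: (o (x, y)).
Qed.

Lemma orientation_eq e o1 o2 : is_orientation e o1 -> is_orientation e o2 ->
  (forall a b, e a b -> o1 (a, b) = o2 (a, b)) -> o1 = o2.
Proof.
move=> /is_orientationP h1 /is_orientationP h2 agree; apply/ffunP => [[a b]].
case eab: (e a b); first exact: agree.
have [arc1 _] := h1 a b; have [arc2 _] := h2 a b; rewrite eab in arc1 arc2.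
by case: (o1 (a, b)) arc1 => [/(_ isT) | _]; case: (o2 (a, b)) arc2 => [/(_ isT) | _].
Qed.

Lemma invert_orientation e X o : symmetric e -> is_orientation e o ->
  is_orientation e (invert X o).
Proof.
move=> se /is_orientationP h; apply/is_orientationP => x y.
rewrite !invertE [(y \in X) && _]andbC; case: ifP => _; last exact: h.
have [arc edge] := h y x; rewrite se in arc edge; split=> // /edge ->.
Qed.

Lemma apply_inversions_cat s1 s2 o :
  apply_inversions (s1 ++ s2) o = apply_inversions s2 (apply_inversions s1 o).
Proof. exact: foldl_cat. Qed.

Lemma apply_inversions_orientation e s o : symmetric e -> is_orientation e o ->
  is_orientation e (apply_inversions s o).
Proof. by elim: s o => // X s IH o se oe; apply/IH/invert_orientation. Qed.

Lemma apply_inversions_outside p V s o a b : inversions_within p V s ->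
  ~~ ((a \in V) && (b \in V)) -> apply_inversions s o (a, b) = o (a, b).
Proof.
elim: s o => // X s IH o /andP[/andP[XV _] sV] abV; rewrite [LHS]IH // invertE.
case: ifP => // /andP[aX bX].
by rewrite (subsetP XV _ aX) (subsetP XV _ bX) in abV.
Qed.

Lemma inversions_within_sub p V W s : V \subset W ->
  inversions_within p V s -> inversions_within p W s.
Proof.
by move=> VW; apply: sub_all => X /andP[XV ->]; rewrite (subset_trans XV VW).
Qed.

Lemma inversions_within_cat p V s1 s2 :
  inversions_within p V (s1 ++ s2) = inversions_within p V s1 && inversions_within p V s2.
Proof. exact: all_cat. Qed.

Lemma restrict_invert e X o : symmetric e ->
  restrict e (invert X o) = invert X (restrict e o).
Proof.
by move=> se; apply/ffunP => [[a b]]; rewrite !ffunE /=; case: ifP; rewrite // se.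
Qed.

Lemma restrict_apply_inversions e s o : symmetric e ->
  restrict e (apply_inversions s o) = apply_inversions s (restrict e o).
Proof.
by elim: s o => // X s IH o se; rewrite /= IH // restrict_invert.
Qed.

Lemma restrict_orientation e e' o : symmetric e' -> subrel e' e ->
  is_orientation e o -> is_orientation e' (restrict e' o).
Proof.
move=> se' sub /is_orientationP h; apply/is_orientationP => x y.
rewrite !ffunE /=; split; first by case/andP.
by move=> exy; rewrite se' exy !andbT; have [_ ->] := h x y; last exact: sub.
Qed.

Lemma restrict_eq_arc e o1 o2 a b : restrict e o1 = restrict e o2 -> e a b ->
  o1 (a, b) = o2 (a, b).
Proof.
by move=> /(congr1 (fun o => o (a, b))); rewrite !ffunE /= => + eab; rewrite eab !andbT.
Qed.

Lemma transformableP p V o1 o2 k :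
  reflect (exists s, [/\ size s = k, inversions_within p V s
                       & apply_inversions s o1 = o2])
          (transformable p V o1 o2 k).
Proof.
apply: (iffP existsP) => [[s /andP[sV /eqP <-]] | [s [<- sV <-]]].
  by exists s; rewrite size_tuple.
by exists (in_tuple s); rewrite [all _ _]sV eqxx.
Qed.

Lemma inv_dist_min p V o1 o2 k : transformable p V o1 o2 k -> inv_dist p V o1 o2 <= k.
Proof.
move=> tk; rewrite /inv_dist; case: excluded_middle_informative => [ex | []].
  by case: ex_minnP => m _; apply.
by exists k.
Qed.

Lemma inv_dist_transformable p V o1 o2 : (exists k, transformable p V o1 o2 k) ->
  transformable p V o1 o2 (inv_dist p V o1 o2).
Proof.
by move=> ex; rewrite /inv_dist; case: excluded_middle_informative => [? | []] //;
  case: ex_minnP.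
Qed.

Lemma disagreements0_eq e o1 o2 : is_orientation e o1 -> is_orientation e o2 ->
  disagreements o1 o2 = set0 -> o1 = o2.
Proof.
move=> o1e o2e D0; apply: (orientation_eq o1e o2e) => a b eab.
have agree c d : o1 (c, d) && o2 (d, c) = false.
  by have := in_set0 (c, d); rewrite -D0 inE.
move/is_orientationP: o1e => /(_ a b) [_ /(_ eab) o1ba].
move/is_orientationP: o2e => /(_ a b) [_ /(_ eab) o2ba].
have := agree a b; have := agree b a; rewrite o1ba o2ba.
by case: (o1 (a, b)); case: (o2 (a, b)).
Qed.

Lemma disagreements_invert_pair e o o' x y : is_orientation e o ->
  is_orientation e o' -> (x, y) \in disagreements o o' ->
  disagreements (invert [set x; y] o) o' \subset disagreements o o' :\ (x, y).
Proof.
move=> /is_orientationP oe /is_orientationP o'e; rewrite inE /= => /andP[oxy o'yx].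
have exy : e x y by have [+ _] := oe x y; apply.
have oyx : o (y, x) = false by have [_ ->] := oe x y; rewrite ?oxy.
have o'xy : o' (x, y) = false.
  by have [_ /(_ exy)] := o'e x y; rewrite o'yx; case: (o' (x, y)).
have no_loop z : o (z, z) = false.
  by apply/negbTE/negP => ozz; have [/(_ ozz) /(oe z z).2] := oe z z; rewrite ozz.
apply/subsetP => [[a b]]; rewrite !inE /= invertE !inE xpair_eqE.
case: ifP => [/andP[aX bX] | nX].
  by case/orP: aX => /eqP->; case/orP: bX => /eqP->; rewrite ?oyx ?o'xy ?no_loop ?andbF.
move=> ->; rewrite andbT; apply: contraFN nX => /andP[/eqP-> /eqP->].
by rewrite !eqxx orbT.
Qed.

Lemma transformable_orientations p V e o1 o2 : 2 <= p -> symmetric e ->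
  (forall x y, e x y -> (x \in V) && (y \in V)) ->
  is_orientation e o1 -> is_orientation e o2 -> exists k, transformable p V o1 o2 k.
Proof.
move=> p2 se eV o1e o2e.
suff [s [sV <-]] : exists s, inversions_within p V s /\ apply_inversions s o1 = o2.
  by exists (size s); apply/transformableP; exists s.
move: {2}#|_| (leqnn #|disagreements o1 o2|) => n; elim: n o1 o1e => [|n IH] o o_e.
  by rewrite leqn0 cards_eq0 => /eqP D0; exists [::]; rewrite (disagreements0_eq o_e o2e).
have [D0 _ | [[x y] xyD]] := set_0Vmem (disagreements o o2).
  by exists [::]; rewrite (disagreements0_eq o_e o2e).
move=> Dn; have exy : e x y.
  by move: xyD; rewrite inE => /andP[+ _]; have /is_orientationP/(_ x y)[+ _] := o_e.
have /IH [|s [sV <-]] := invert_orientation [set x; y] se o_e.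
  apply: leq_trans (subset_leq_card (disagreements_invert_pair o_e o2e xyD)) _.
  by move: Dn; rewrite (cardsD1 (x, y)) xyD add1n ltnS.
exists ([set x; y] :: s); split=> //=; rewrite sV andbT.
apply/andP; split; last by rewrite cards2 (leq_trans _ p2) // ltnS leq_b1.
by apply/subsetP => z; rewrite !inE => /orP[]/eqP->; case/andP: (eV _ _ exy).
Qed.

Lemma inv_dist_le_inv_diam p V e o1 o2 : is_orientation e o1 -> is_orientation e o2 ->
  inv_dist p V o1 o2 <= inv_diam p V e.
Proof.
move=> o1e o2e; apply: leq_trans (leq_bigmax_cond o1 o1e).
exact: (leq_bigmax_cond (F := fun o => inv_dist p V o1 o)).
Qed.

Lemma inversions_le_inv_diam p V e o1 o2 : 2 <= p -> symmetric e ->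
  (forall x y, e x y -> (x \in V) && (y \in V)) ->
  is_orientation e o1 -> is_orientation e o2 ->
  exists s, [/\ size s <= inv_diam p V e, inversions_within p V s
              & apply_inversions s o1 = o2].
Proof.
move=> p2 se eV o1e o2e.
have /transformableP [s [size_s sV <-]] :=
  inv_dist_transformable (transformable_orientations p2 se eV o1e o2e).
by exists s; split; rewrite // size_s inv_dist_le_inv_diam.
Qed.

Section UnionWithInduced.
Variables (e eH : rel T) (p : nat) (VH VI : {set T}).
Hypotheses (p2 : 2 <= p) (se : symmetric e) (seH : symmetric eH) (eH_sub : subrel eH e).
Hypothesis eH_in : forall x y, eH x y -> (x \in VH) && (y \in VH).
Hypothesis cover : forall x y, e x y -> eH x y || ((x \in VI) && (y \in VI)).

Let eI x y := [&& e x y, x \in VI & y \in VI].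

Lemma inv_dist_union o1 o2 : is_orientation e o1 -> is_orientation e o2 ->
  inv_dist p [set: T] o1 o2 <= inv_diam p VH eH + inv_diam p VI eI.
Proof.
move=> o1e o2e.
have seI : symmetric eI by move=> x y; rewrite /eI se [(x \in VI) && _]andbC.
have eI_sub : subrel eI e by move=> x y /andP[].
have eI_in x y : eI x y -> (x \in VI) && (y \in VI) by case/andP.
have [sH [sizeH sHV oH]] := inversions_le_inv_diam p2 seH eH_in
  (restrict_orientation seH eH_sub o1e) (restrict_orientation seH eH_sub o2e).
set o1' := apply_inversions sH o1.
have o1'e : is_orientation e o1' by apply: apply_inversions_orientation.
have [sI [sizeI sIV oI]] := inversions_le_inv_diam p2 seI eI_in
  (restrict_orientation seI eI_sub o1'e) (restrict_orientation seI eI_sub o2e).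
apply: leq_trans (leq_add sizeH sizeI); rewrite -size_cat; apply/inv_dist_min.
apply/transformableP; exists (sH ++ sI); split=> //.
  by rewrite inversions_within_cat (inversions_within_sub (subsetT VH) sHV)
             (inversions_within_sub (subsetT VI) sIV).
rewrite apply_inversions_cat -/o1'.
apply: (orientation_eq (apply_inversions_orientation _ se o1'e) o2e) => a b eab.
have [abI | abnI] := boolP ((a \in VI) && (b \in VI)).
  apply: (restrict_eq_arc (e := eI)); last by rewrite /eI eab.
  by rewrite restrict_apply_inversions.
rewrite (apply_inversions_outside _ sIV abnI).
apply: (restrict_eq_arc (e := eH)); first by rewrite restrict_apply_inversions.
by have := cover eab; rewrite (negbTE abnI) orbF.
Qed.

End UnionWithInduced.
End Inversions.

Theorem mainTheorem12 (T : finType) (e : rel T) (p : nat)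
    (VH : {set T}) (eH : rel T) (VI : {set T}) :
  2 <= p ->
  symmetric e -> irreflexive e ->
  symmetric eH ->
  (forall x y, eH x y -> e x y) ->
  (forall x y, eH x y -> (x \in VH) && (y \in VH)) ->
  VH :|: VI = [set: T] ->
  (forall x y, e x y -> eH x y || ((x \in VI) && (y \in VI))) ->
  inv_diam p [set: T] e <=
    inv_diam p VH eH + inv_diam p VI (fun x y => [&& e x y, x \in VI & y \in VI]).
Proof.
move=> p2 se _ seH eH_sub eH_in _ cover.
apply/bigmax_leqP => o1 o1e; apply/bigmax_leqP => o2 o2e.
exact: inv_dist_union.
Qed.
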